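(* The set $\overline{T(\mathbf I)}$ is nowhere dense in $S(\mathbf I)$.
   Context: $\mathbf I=[0,1]$; $C(\mathbf I)$ is the space of continuous self-maps of $\mathbf I$ with the supremum metric; $S(\mathbf I)\subset C(\mathbf I)$ is the subspace of surjective maps; $T(\mathbf I)$ is the set of transitive maps ($f$ is transitive if for all non-empty open $U,V\subset\mathbf I$ there is $n\ge1$ with $U\cap f^{-n}(V)\ne\emptyset$) and $\overline{T(\mathbf I)}$ its closure in $C(\mathbf I)$ (which is contained in $S(\mathbf I)$). *)

From HB Require Import structures.
From mathcomp Require Import all_boot all_order all_algebra.
From mathcomp Require Import all_classical all_reals all_analysis.
Set Implicit Arguments. Unset Strict Implicit. Unset Printing Implicit Defensive.
Import Order.TTheory GRing.Theory Num.Theory numFieldNormedType.Exports.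
Local Open Scope classical_set_scope.
Local Open Scope ring_scope.

Section Defs.
Variable R : realType.

Definition unitI : set R := `[0, 1]%classic.

(* C(I): continuous self-maps of I (represented by functions R -> R; only the
   values on I matter). *)
Definition CI : set (R -> R) :=
  [set f : R -> R | {within unitI, continuous f} /\ (forall x, unitI x -> unitI (f x))].

Definition SI : set (R -> R) :=
  [set f | CI f /\ (forall y, unitI y -> exists2 x, unitI x & f x = y)].

Definition supdist (f g : R -> R) : R :=
  sup [set `|f x - g x| | x in unitI].

Definition openI (U : set R) : Prop :=
  exists2 O : set R, open O & U = unitI `&` O.

Definition transitive (f : R -> R) : Prop :=
  forall U V : set R, openI U -> openI V -> U !=set0 -> V !=set0 ->
    exists2 n : nat, (1 <= n)%N &
      (U `&` [set x | unitI x /\ V (iter n f x)]) !=set0.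

Definition TI : set (R -> R) := [set f | CI f /\ transitive f].

Definition closure_in (X A : set (R -> R)) : set (R -> R) :=
  [set f | X f /\ forall e : R, 0 < e -> exists2 g, (X `&` A) g & supdist f g < e].

Definition interior_in (X A : set (R -> R)) : set (R -> R) :=
  [set f | X f /\ exists2 e : R, 0 < e &
     forall g, X g -> supdist f g < e -> A g].

Definition nowhere_dense_in (X A : set (R -> R)) : Prop :=
  interior_in X (closure_in X A) = set0.

End Defs.

From Pilot Require Import Defs.
From mathcomp Require Import all_boot all_order all_algebra.
From mathcomp Require Import all_classical all_reals all_analysis.
From mathcomp Require Import ring lra.
Set Implicit Arguments.
Unset Strict Implicit.
Unset Printing Implicit Defensive.
Import Order.TTheory GRing.Theory Num.Theory numFieldNormedType.Exports.
Local Open Scope classical_set_scope.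
Local Open Scope ring_scope.

(* Let f be a surjection with fixed point p.  Composing f with a surjective
   piecewise-linear self-map of [0,1] that collapses [p-d, p+d] to p and moves
   no point by more than d yields a surjection g, d-close to f, that is
   constantly p on a neighbourhood (p-s, p+s) of p.  Every map s-close to g
   then sends [0,1] ∩ (p-s, p+s) into itself, so it cannot be transitive:
   this invariant open set never meets the open set [0,1] \ [p-s, p+s].
   Hence g lies outside the closure of T(I), so f is not in its interior. *)

Section Pinch.
Variables (R : realFieldType) (p d : R).

(* The piecewise-linear map through (0,0), (p-d,p), (p+d,p) and (1,1). *)
Definition pinch (y : R) : R :=
  p + p / (p - d) * Num.min 0 (y - p + d)
    + (1 - p) / (1 - p - d) * Num.max 0 (y - p - d).

Definition pinch_width : Prop :=
  [/\ 0 <= p <= 1, 0 < d, 0 < p -> d < p & p < 1 -> d < 1 - p].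

Lemma pinch_const y : p - d <= y -> y <= p + d -> pinch y = p.
Proof.
by move=> y_ge y_le; rewrite /pinch min_l ?max_l ?mulr0 ?addr0 //; lra.
Qed.

Lemma pinch_width_neq0 : pinch_width -> p - d != 0 /\ 1 - p - d != 0.
Proof.
case=> /andP[p_ge0 p_le1] d_gt0 d_ltp d_lt1p; split.
  have [/d_ltp d_lt|p_le0] := ltrP 0 p; first by rewrite subr_eq0 gt_eqF.
  by rewrite lt_eqF //; lra.
have [/d_lt1p d_lt|p_ge1] := ltrP p 1; first by rewrite subr_eq0 gt_eqF.
by rewrite lt_eqF //; lra.
Qed.

Lemma pinch_left y : pinch_width -> y <= p - d ->
  pinch y = p * (y / (p - d)).
Proof.
move=> /[dup] /pinch_width_neq0 [pd_neq0 _] [_ d_gt0 _ _] y_le.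
by rewrite /pinch min_r ?max_l ?mulr0 ?addr0; [field|lra|lra].
Qed.

Lemma pinch_right y : pinch_width -> p + d <= y ->
  pinch y = 1 - (1 - p) * ((1 - y) / (1 - p - d)).
Proof.
move=> /[dup] /pinch_width_neq0 [_ p'd_neq0] [_ d_gt0 _ _] y_ge.
by rewrite /pinch min_l ?max_r ?mulr0 ?addr0; [field|lra|lra].
Qed.

Lemma pinch0 : pinch_width -> pinch 0 = 0.
Proof.
move=> /[dup] pw [/andP[p_ge0 _] d_gt0 d_ltp _].
have [pd_ge0|pd_lt0] := lerP 0 (p - d).
  by rewrite pinch_left // mul0r mulr0.
have p0 : p = 0 by case: (ltrP 0 p) => [/d_ltp|]; lra.
by rewrite pinch_const //; lra.
Qed.

Lemma pinch1 : pinch_width -> pinch 1 = 1.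
Proof.
move=> /[dup] pw [/andP[_ p_le1] d_gt0 _ d_lt1p].
have [pd_le1|pd_gt1] := lerP (p + d) 1.
  by rewrite pinch_right // subrr mul0r mulr0 subr0.
have p1 : p = 1 by case: (ltrP p 1) => [/d_lt1p|]; lra.
by rewrite pinch_const //; lra.
Qed.

Lemma pinch_bounds y : pinch_width -> 0 <= y <= 1 ->
  0 <= pinch y <= 1 /\ `|pinch y - y| <= d.
Proof.
move=> /[dup] pw [/andP[p_ge0 p_le1] d_gt0 d_ltp d_lt1p] /andP[y_ge0 y_le1].
have [y_le|y_gt] := lerP y (p - d).
  have pd_gt0 : 0 < p - d by have := d_ltp; lra.
  rewrite pinch_left //; set t := y / (p - d).
  have t_ge0 : 0 <= t by rewrite divr_ge0 //; lra.
  have t_le1 : t <= 1 by rewrite ler_pdivrMr // mul1r.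
  have -> : p * t - y = d * t by rewrite /t; field; lra.
  rewrite ger0_norm; last by nra.
  by split; [apply/andP; split|]; nra.
have [y_ge|y_lt] := lerP (p + d) y.
  have p'd_gt0 : 0 < 1 - p - d by have := d_lt1p; lra.
  rewrite pinch_right //; set t := (1 - y) / (1 - p - d).
  have t_ge0 : 0 <= t by rewrite divr_ge0 //; lra.
  have t_le1 : t <= 1 by rewrite ler_pdivrMr // mul1r; lra.
  have -> : 1 - (1 - p) * t - y = - (d * t) by rewrite /t; field; lra.
  rewrite normrN ger0_norm; last by nra.
  by split; [apply/andP; split|]; nra.
rewrite pinch_const; [|lra|lra].
by rewrite ler_norml; split; apply/andP; split; lra.
Qed.

End Pinch.

Lemma pinch_width_exists (R : realFieldType) (p e : R) :
  0 <= p <= 1 -> 0 < e -> exists2 d, d < e & pinch_width p d.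
Proof.
move=> p01 e_gt0.
pose u := if 0 < p then p else 1; pose v := if p < 1 then 1 - p else 1.
have u_gt0 : 0 < u by rewrite /u; case: ifP => // _; exact: ltr01.
have v_gt0 : 0 < v.
  by rewrite /v; case: ifP => [|_]; [rewrite subr_gt0|exact: ltr01].
pose m := Num.min e (Num.min u v).
have m_gt0 : 0 < m by rewrite !lt_min e_gt0 u_gt0 v_gt0.
have [m_le_e m_le_u m_le_v] : [/\ m <= e, m <= u & m <= v].
  by rewrite !ge_min !lexx !orbT.
exists (m / 2); first lra.
split=> //; first lra.
  by move=> p_gt0; move: m_le_u; rewrite /u p_gt0; lra.
by move=> p_lt1; move: m_le_v; rewrite /v p_lt1; lra.
Qed.

Section UnitInterval.
Variable R : realType.
Implicit Types (f g h : R -> R) (c : R).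
Local Notation maps_unitI f := (set_fun (@unitI R) (@unitI R) f).

Lemma unitIP (x : R) : unitI x <-> 0 <= x <= 1.
Proof. by rewrite /unitI /= in_itv. Qed.

Lemma unitI0 : unitI (0 : R).
Proof. by apply/unitIP; rewrite lexx ler01. Qed.

Lemma unitI1 : unitI (1 : R).
Proof. by apply/unitIP; rewrite lexx ler01. Qed.

Lemma pinch_continuous (p d : R) : continuous (pinch p d).
Proof.
move=> x; have id_cont : {for x, continuous id} by exact: cvg_id.
apply: cvgD; first apply: cvgD; first exact: cvg_cst.
  apply: cvgM; first exact: cvg_cst.
  apply: (@continuous_min _ _ (cst 0) (fun y => y - p + d)).
    exact: cvg_cst.
  by apply: cvgD; [apply: cvgB; [exact: id_cont|exact: cvg_cst]|exact: cvg_cst].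
apply: cvgM; first exact: cvg_cst.
apply: (@continuous_max _ _ (cst 0) (fun y => y - p - d)).
  exact: cvg_cst.
by apply: cvgB; [apply: cvgB; [exact: id_cont|exact: cvg_cst]|exact: cvg_cst].
Qed.

Lemma unitI_onto (h : R -> R) :
  {within `[0, 1], continuous h} -> h 0 = 0 -> h 1 = 1 ->
  forall y, unitI y -> exists2 x, unitI x & h x = y.
Proof.
move=> h_cont h0 h1 y /unitIP y01.
have [|x x01 <-] := @IVT R h 0 1 y ler01 h_cont.
  by rewrite h0 h1 min_l ?max_r.
by exists x; rewrite // /unitI inE.
Qed.

Lemma CI_fixed_point f : CI f -> exists2 p, unitI p & f p = p.
Proof.
case=> f_cont f_in.
have /unitIP/andP[f0_ge0 _] := f_in 0 unitI0.
have /unitIP/andP[_ f1_le1] := f_in 1 unitI1.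
have disp_cont : {within `[0, 1], continuous (fun x => x - f x)}.
  by move=> x; apply: cvgB; [exact: incl_subspace_continuous | exact: f_cont].
have [|p p01 /eqP] := IVT ler01 disp_cont (v := 0).
  by rewrite ge_min le_max; apply/andP; split; apply/orP; [left|right]; lra.
by rewrite subr_eq0 => /eqP pf; exists p.
Qed.

Lemma within_continuous_dist f (A : set R) (p e : R) :
  {within A, continuous f} -> A p -> 0 < e ->
  exists2 r, 0 < r & forall x, A x -> `|x - p| < r -> `|f x - f p| < e.
Proof.
move=> f_cont Ap e_gt0.
have /cvgrPdist_lt/(_ e e_gt0) := (subspace_continuousP A f).1 f_cont p Ap.
rewrite near_withinE => /nbhs_ballP[r r_gt0 f_near]; exists r => // x Ax xp.
by rewrite distrC; apply: f_near; rewrite // /ball /= distrC.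
Qed.

Lemma supdist_le f g c :
  (forall x, unitI x -> `|f x - g x| <= c) -> supdist f g <= c.
Proof.
move=> fg_le; apply: ge_sup.
  by exists `|f 0 - g 0|, 0 => //; exact: unitI0.
by move=> _ [x Ix <-]; exact: fg_le.
Qed.

Lemma le_supdist f g x : maps_unitI f -> maps_unitI g ->
  unitI x -> `|f x - g x| <= supdist f g.
Proof.
move=> f_in g_in Ix; apply: ub_le_sup; last by exists x.
exists 1 => _ [y /[dup] /f_in/unitIP/andP[? ?] /g_in/unitIP/andP[? ?] <-].
by rewrite ler_norml; apply/andP; split; lra.
Qed.

Lemma supdist_triangle f g h :
  maps_unitI f -> maps_unitI g -> maps_unitI h ->
  supdist f h <= supdist f g + supdist g h.
Proof.
move=> f_in g_in h_in; apply: supdist_le => x Ix.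
by apply: le_trans (ler_distD (g x) _ _) _; apply: lerD; exact: le_supdist.
Qed.

Lemma closure_in_closure_in (X A : set (R -> R)) :
  X `<=` @CI R -> closure_in X (closure_in (@CI R) A) `<=` closure_in (@CI R) A.
Proof.
move=> XC f [Xf f_near]; have [_ f_in] := XC f Xf; split; first exact: XC.
move=> e e_gt0; have e2_gt0 : 0 < e / 2 by lra.
have [g [_ [[_ g_in] g_near]] fg_lt] := f_near _ e2_gt0.
have [h CIAh gh_lt] := g_near _ e2_gt0; have [[_ h_in] _] := CIAh.
exists h => //; apply: le_lt_trans (supdist_triangle f_in g_in h_in) _; lra.
Qed.

Lemma pinched_approx f p e : SI f -> unitI p -> f p = p -> 0 < e ->
  exists g, [/\ SI g, supdist f g < e &
    exists s, [/\ 0 < s, s < 1 / 2 &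
      forall x, unitI x -> `|x - p| < s -> g x = p]].
Proof.
move=> [[f_cont f_in] f_onto] /[dup] Ip /unitIP p01 fp e_gt0.
have [d d_lt_e pw] := pinch_width_exists p01 e_gt0.
have d_gt0 : 0 < d by case: pw.
pose g := pinch p d \o f.
have g_in : maps_unitI g.
  by move=> x /f_in /unitIP y01; apply/unitIP; exact: (pinch_bounds pw y01).1.
have g_cont : {within @unitI R, continuous g}.
  by move=> x; apply: continuous_comp (f_cont x) (@pinch_continuous p d _).
have g_onto y : unitI y -> exists2 x, unitI x & g x = y.
  have pinch_cont : {within `[0, 1], continuous pinch p d}.
    exact/continuous_subspaceT/pinch_continuous.
  move=> /(unitI_onto pinch_cont (pinch0 pw) (pinch1 pw)) [c].
  by move=> /f_onto [x Ix <-] <-; exists x.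
have [r r_gt0 f_near_p] := within_continuous_dist f_cont Ip d_gt0.
exists g; split.
- by split; first split.
- apply: le_lt_trans d_lt_e; apply: supdist_le => x /f_in /unitIP y01.
  by rewrite distrC; exact: (pinch_bounds pw y01).2.
- have s_le_r : Num.min r (1 / 4) <= r by rewrite ge_min lexx.
  exists (Num.min r (1 / 4)); split.
  + by rewrite lt_min r_gt0 /=; lra.
  + by rewrite gt_min; apply/orP; right; lra.
  + move=> x Ix /lt_le_trans /(_ s_le_r) /(f_near_p x Ix).
    by rewrite fp ltr_norml => /andP[? ?]; apply: pinch_const; lra.
Qed.

Lemma transitive_invariant_meets f (U V : set R) :
  Defs.transitive f -> Defs.openI U -> Defs.openI V -> U !=set0 -> V !=set0 ->
  (forall x, U x -> U (f x)) -> U `&` V !=set0.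
Proof.
move=> f_tr oU oV U0 V0 U_inv.
have [n _ [x [Ux [_ Vfx]]]] := f_tr U V oU oV U0 V0.
exists (iter n f x); split => //.
by elim: n {Vfx} => //= n /U_inv.
Qed.

Lemma trapping_ball_not_transitive f p s :
  unitI p -> 0 < s -> s < 1 / 2 -> maps_unitI f ->
  (forall x, unitI x -> `|x - p| < s -> `|f x - p| < s) -> ~ Defs.transitive f.
Proof.
move=> /[dup] Ip /unitIP/andP[p_ge0 p_le1] s_gt0 s_lt f_in f_trap f_tr.
have [x [[_ Bx] [_ Cx]]] :
    (@unitI R `&` ball p s) `&` (@unitI R `&` ~` closed_ball p s) !=set0.
  apply: transitive_invariant_meets f_tr _ _ _ _ _.
  - by exists (ball p s) => //; exact: ball_open.
  - by exists (~` closed_ball p s) => //; exact/closed_openC/closed_ball_closed.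
  - by exists p; split => //; exact: ballxx.
  - rewrite /= closed_ballE // /closed_ball_ /=.
    have [p_gt|p_le] := ltrP s p.
      exists 0; split; first exact: unitI0.
      by rewrite /= subr0 ger0_norm // => ?; lra.
    exists 1; split; first exact: unitI1.
    by rewrite /= distrC ger0_norm ?subr_ge0 // => ?; lra.
  - move=> y [Iy By]; split; first exact: f_in.
    by move: By; rewrite /ball /= !(distrC p); exact: f_trap.
by apply: Cx; exact: subset_closed_ball.
Qed.

End UnitInterval.

Theorem theorem6 (R : realType) :
  nowhere_dense_in (@SI R) (closure_in (@CI R) (@TI R)).
Proof.
apply/seteqP; split => // f [Sf [e e_gt0 f_int]].
have [p Ip fp] := CI_fixed_point Sf.1.
have [g [Sg fg_lt [s [s_gt0 s_lt g_p]]]] := pinched_approx Sf Ip fp e_gt0.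
have SI_CI : @SI R `<=` @CI R by move=> h [].
have [_ clTI_g] := closure_in_closure_in SI_CI (f_int g Sg fg_lt).
have [g' [[_ g'_in] [_ g'_tr]] gg'_lt] := clTI_g s s_gt0.
have [[_ g_in] _] := Sg.
have g'_trap x : unitI x -> `|x - p| < s -> `|g' x - p| < s.
  move=> Ix xp; rewrite -(g_p x Ix xp) distrC; apply: le_lt_trans gg'_lt.
  exact: le_supdist.
by case: (trapping_ball_not_transitive Ip s_gt0 s_lt g'_in g'_trap g'_tr).
Qed.
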